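(* Let $p$ be a prime. If $G$ is a finite group, then $RG_p(G)=-\frac{1}{|G_{\widehat{p}}|}$.
   Context: $G_{\widehat{p}}$ denotes the pro-$p$ completion of $G$. For a group $A$, $d(A)$ is the minimal number of generators and $d_p(A)=d\big(A/[A,A]A^p\big)$. The $p$-gradient is $RG_p(G)=\inf_H\frac{d_p(H)-1}{[G:H]}$, the infimum over normal subgroups $H\trianglelefteq G$ of $p$-power index. *)

From HB Require Import structures.
From mathcomp Require Import all_boot all_order all_algebra all_fingroup all_solvable.
Set Implicit Arguments. Unset Strict Implicit. Unset Printing Implicit Defensive.
Import Order.TTheory GRing.Theory Num.Theory.

Local Open Scope group_scope.

Definition dgen (gT : finGroupType) (A : {set gT}) : nat :=
  \big[minn/#|A|]_(S : {set gT} | <<S>> == A) #|S|.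

Definition commpow (gT : finGroupType) (p : nat) (A : {set gT}) : {set gT} :=
  <<[~: A, A] :|: [set x ^+ p | x in A]>>.

Definition dp (gT : finGroupType) (p : nat) (A : {set gT}) : nat :=
  dgen (A / commpow p A).

Definition ppow_normal (gT : finGroupType) (p : nat) (G H : {group gT}) : bool :=
  (H <| G) && p.-nat #|G : H|.

Local Open Scope ring_scope.

Definition RGterm (gT : finGroupType) (p : nat) (G H : {group gT}) : rat :=
  ((dp p H)%:R - 1) / (#|G : H|)%:R.

(* p-gradient: infimum (= minimum, the family being finite and containing G)
   over normal subgroups H of p-power index. *)
Definition RGp (gT : finGroupType) (p : nat) (G : {group gT}) : rat :=
  \big[Num.min/RGterm p G G]_(H : {group gT} | ppow_normal p G H) RGterm p G H.

(* For finite G, the pro-p completion is the inverse limit of the finite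
   p-groups G/N, N normal of p-power index; this is G / N0 where N0 is the
   intersection of all such N. *)
Definition pcompl_core (gT : finGroupType) (p : nat) (G : {group gT}) : {set gT} :=
  \bigcap_(H : {group gT} | ppow_normal p G H) H.

Definition pcompl_order (gT : finGroupType) (p : nat) (G : {group gT}) : nat :=
  #|(G / pcompl_core p G)%g|.

From HB Require Import structures.
From mathcomp Require Import all_boot all_order all_algebra all_fingroup all_solvable.
Import Order.TTheory GRing.Theory Num.Theory.
Set Implicit Arguments. Unset Strict Implicit.

(* The normal subgroups of p-power index of a finite group G are closed under
   intersection, so they have a least member N0, and G / N0 is the pro-p
   completion of G.  As N0 / [N0,N0]N0^p is a p-group, [N0,N0]N0^p is again such
   a subgroup, so it equals N0 and d_p(N0) = 0: the term of N0 is -1/[G:N0].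
   Any other member H has d_p(H) >= 1, hence a nonnegative term, because
   d_p(H) = 0 means H = [H,H]H^p, so that the p-group H / N0 coincides with its
   Frattini subgroup and is trivial. *)

Local Open Scope group_scope.

Section CommPow.
Variables (p : nat) (gT : finGroupType).
Implicit Types (A : {set gT}) (H N : {group gT}).

Canonical commpow_group A : {group gT} := Eval hnf in [group of commpow p A].

Lemma commpow_sub H : commpow p H \subset H.
Proof.
rewrite gen_subG subUset der1_subG /=.
by apply/subsetP => _ /imsetP[x Hx ->]; rewrite groupX.
Qed.

Lemma norms_commpow A H : A \subset 'N(H) -> A \subset 'N(commpow p H).
Proof.
move=> nHA; apply/norms_gen/normsU; first exact: normsR.
apply/subsetP => y Ay; rewrite inE; apply/subsetP => _ /imsetP[_ /imsetP[x Hx ->] ->].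
by rewrite conjXg; apply: imset_f; rewrite memJ_norm // (subsetP nHA).
Qed.

Lemma commpow_normal H : commpow p H <| H.
Proof. by rewrite /normal commpow_sub norms_commpow ?normG. Qed.

Lemma quotient_commpow H N :
  H \subset 'N(N) -> commpow p H / N = commpow p (H / N).
Proof.
move=> nNH; rewrite quotient_gen; last first.
  by rewrite -gen_subG (subset_trans (commpow_sub H)).
congr <<_>>; rewrite quotientU quotientR //; congr (_ :|: _).
apply/setP=> y; apply/morphimP/imsetP.
  case=> _ _ /imsetP[x Hx ->] ->; exists (coset N x); first exact: mem_quotient.
  by rewrite morphX // (subsetP nNH).
case=> _ /morphimP[x Nx Hx ->] ->.
by exists (x ^+ p); [exact: groupX | exact: imset_f | rewrite morphX].
Qed.

Lemma commpow_Phi H : p.-group H -> commpow p H = 'Phi(H).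
Proof. by move=> pH; rewrite (Phi_joing pH) (MhoE 1 pH) expn1 joing_idr. Qed.

Hypothesis p_pr : prime p.

Lemma pgroup_quotient_commpow H : p.-group (H / commpow p H).
Proof.
rewrite -pnat_exponent; apply: pnat_dvd (pnat_id p_pr).
apply/exponentP => _ /morphimP[x Nx Hx ->].
rewrite -morphX //= coset_id //; apply/mem_gen/setUP; right; exact: imset_f.
Qed.

End CommPow.

Lemma dgen_eq0 (gT : finGroupType) (A : {group gT}) : (dgen A == 0) = (A :==: 1).
Proof.
apply/idP/eqP => [|->]; last first.
  by rewrite -leqn0 -(cards0 gT); apply: (@bigmin_le_cond _ nat); rewrite gen0.
apply: contraTeq => ntA; rewrite -lt0n; apply: (big_ind (leq 1)) => [||S /eqP genS].
- exact: cardG_gt0.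
- by move=> m n m_gt0 n_gt0; rewrite leq_min m_gt0.
- by rewrite card_gt0; apply: contra_neq ntA => S0; rewrite -genS S0 gen0.
Qed.

Lemma dp_eq0 (p : nat) (gT : finGroupType) (H : {group gT}) :
  (dp p H == 0) = (commpow p H == H :> {set gT}).
Proof.
rewrite /dp (dgen_eq0 (H / commpow p H)%G) -subG1 quotient_sub1; last first.
  exact: normal_norm (commpow_normal p H).
by rewrite eqEsubset commpow_sub.
Qed.

Lemma pquotient_trivial_commpow (p : nat) (gT : finGroupType) (H N : {group gT}) :
  H \subset 'N(N) -> p.-group (H / N) -> commpow p H = H -> H / N = 1.
Proof.
move=> nNH pHN fixH.
have: ~~ ('Phi(H / N) \proper H / N).
  by rewrite -(commpow_Phi pHN) -quotient_commpow // fixH proper_irrefl.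
by apply: contraNeq => /Phi_proper.
Qed.

Section PPowerNormal.
Variables (p : nat) (gT : finGroupType) (G : {group gT}).
Hypothesis p_pr : prime p.
Local Notation ppn := (ppow_normal p G).
Implicit Types H K N : {group gT}.

Lemma ppow_normal_refl : ppn G.
Proof. by rewrite /ppow_normal normal_refl indexgg. Qed.

Lemma pnat_index_ppow_normal H N :
  ppn N -> N \subset H -> H \subset G -> p.-nat #|H : N|.
Proof.
case/andP=> _ pN sNH sHG.
by move: pN; rewrite -(Lagrange_index sHG sNH) pnatM => /andP[].
Qed.

Lemma ppow_normalI H K : ppn H -> ppn K -> ppn (H :&: K)%G.
Proof.
case/andP=> nHG pH /andP[nKG pK]; apply/andP; split; first exact: normalI.
have sHG := normal_sub nHG.
rewrite /= -(Lagrange_index sHG (subsetIl H K)) pnatM pH /= indexgI.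
rewrite -card_quotient ?(subset_trans sHG (normal_norm nKG)) //.
apply: pnat_dvd pK; rewrite -card_quotient ?normal_norm //.
exact/cardSg/quotientS/normal_sub.
Qed.

Lemma ppow_normal_commpow H : ppn H -> ppn (commpow p H)%G.
Proof.
case/andP=> nHG pH; have sHG := normal_sub nHG.
have nKG : commpow p H <| G.
  by rewrite /normal (subset_trans (commpow_sub p H)) ?norms_commpow ?normal_norm.
apply/andP; split=> //.
rewrite /= -(Lagrange_index sHG (commpow_sub p H)) pnatM pH /=.
rewrite -card_quotient ?(normal_norm (commpow_normal p H)) //.
exact: pgroup_quotient_commpow.
Qed.

Canonical pcompl_core_group : {group gT} := Eval hnf in [group of pcompl_core p G].

Lemma pcompl_core_sub H : ppn H -> pcompl_core p G \subset H.
Proof. exact: bigcap_inf. Qed.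

Lemma ppow_normal_pcompl_core : ppn (pcompl_core p G)%G.
Proof.
have [N ppnN minN] := arg_minnP (fun H : {group gT} => #|H|) ppow_normal_refl.
suff /group_inj -> : pcompl_core p G = N by [].
apply/eqP; rewrite eqEsubset pcompl_core_sub //=; apply/bigcapsP => H ppnH.
have /minN le_N_HK := ppow_normalI ppnN ppnH.
by apply/setIidPl/eqP; rewrite eqEcard subsetIl.
Qed.

Lemma dp_pcompl_core : dp p (pcompl_core p G) = 0%N.
Proof.
apply/eqP; rewrite (dp_eq0 p (pcompl_core p G)%G) eqEsubset commpow_sub.
by rewrite pcompl_core_sub // ppow_normal_commpow // ppow_normal_pcompl_core.
Qed.

Lemma dp_eq0_pcompl_core H : ppn H -> dp p H = 0%N -> H = (pcompl_core p G)%G.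
Proof.
move=> ppnH /eqP; rewrite dp_eq0 => /eqP fixH.
have [/andP[nCG _] sCH] := (ppow_normal_pcompl_core, pcompl_core_sub ppnH).
have sHG := normal_sub (andP ppnH).1.
have nCH := subset_trans sHG (normal_norm nCG).
have pHC : p.-group (H / pcompl_core p G).
  by rewrite /pgroup card_quotient // (pnat_index_ppow_normal ppow_normal_pcompl_core).
apply/group_inj/eqP; rewrite eqEsubset sCH andbT -quotient_sub1 //.
by rewrite (pquotient_trivial_commpow nCH pHC fixH).
Qed.

Local Open Scope ring_scope.

Lemma RGterm_pcompl_core :
  RGterm p G (pcompl_core p G)%G = - ((pcompl_order p G)%:R)^-1.
Proof.
have nCG := normal_norm (andP ppow_normal_pcompl_core).1.
by rewrite /RGterm dp_pcompl_core sub0r mulN1r /pcompl_order card_quotient.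
Qed.

Lemma RGterm_pcompl_core_le H : ppn H -> RGterm p G (pcompl_core p G)%G <= RGterm p G H.
Proof.
move=> ppnH; have [dp0 | dp_gt0] := posnP (dp p H).
  by rewrite -(dp_eq0_pcompl_core ppnH dp0).
rewrite RGterm_pcompl_core (@le_trans _ _ 0) ?oppr_le0 ?invr_ge0 ?ler0n //.
by rewrite /RGterm divr_ge0 // subr_ge0 ler1n.
Qed.
End PPowerNormal.

Local Open Scope ring_scope.

Theorem corollary2p8 (p : nat) (gT : finGroupType) (G : {group gT}) :
  prime p -> RGp p G = - ((pcompl_order p G)%:R)^-1.
Proof.
move=> p_pr; rewrite -(RGterm_pcompl_core G p_pr); apply/eqP; rewrite eq_le.
rewrite bigmin_le_cond ?ppow_normal_pcompl_core //=.
apply: le_bigmin => [|H]; last exact: RGterm_pcompl_core_le.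
exact: RGterm_pcompl_core_le p_pr _ (ppow_normal_refl p G).
Qed.
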